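(* Consider the fast-slow system $\dot u = w$, $\dot v = u$, $\varepsilon \dot w = z$, $\varepsilon \dot z = \tfrac12(w^3-w)-v$ at $\varepsilon=0$, with Hamiltonian $H(u,v,w,z)=\tfrac18(4u^2-8vw-2w^2+w^4-4z^2)$. For $\mu\in\mathbb R$ there exists a singular periodic orbit $\gamma_0^\mu\subset\{H=\mu\}$ consisting of precisely two slow segments (trajectories of the reduced problem of positive length) and two fast segments (heteroclinic orbits of the layer problem), with slow segments lying entirely in $\mathcal C_{0,l}$ and $\mathcal C_{0,r}$, if and only if \[ \mu\in I_\mu:=\left(-\tfrac18,\ \tfrac1{24}\right). \]
   Context: Critical manifold: $\mathcal C_0=\{z=0,\ v=\tfrac12(w^3-w)\}$; $\mathcal C_{0,l}=\mathcal C_0\cap\{w<-1/\sqrt3\}$, $\mathcal C_{0,r}=\mathcal C_0\cap\{w>1/\sqrt3\}$. Reduced problem: $\dot u=w$, $\dot v=u$ on $\mathcal C_0$. Layer problem: $w'=z$, $z'=\tfrac12(w^3-w)-\bar v$ with $(u,v)=(\bar u,\bar v)$ fixed. A singular periodic orbit is a closed curve obtained by concatenating, alternately, trajectory segments of the reduced problem on $\mathcal C_0\cap\{H=\mu\}$ and heteroclinic orbits of the layer problem whose endpoints (equilibria of the layer problem) coincide with the endpoints of the adjacent slow segments, all lying in the level set $\{H=\mu\}$. *)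

From Stdlib Require Import Reals.
Open Scope R_scope.

Record pt := mkpt { pu : R; pv : R; pw : R; pz : R }.

Definition H (u v w z : R) : R :=
  / 8 * (4 * u ^ 2 - 8 * v * w - 2 * w ^ 2 + w ^ 4 - 4 * z ^ 2).

Definition Hp (p : pt) : R := H (pu p) (pv p) (pw p) (pz p).

Definition in_C0 (p : pt) : Prop :=
  pz p = 0 /\ pv p = (pw p ^ 3 - pw p) / 2.
Definition in_C0l (p : pt) : Prop := in_C0 p /\ pw p < - (1 / sqrt 3).
Definition in_C0r (p : pt) : Prop := in_C0 p /\ 1 / sqrt 3 < pw p.

Definition reduced_segment (a b : R) (g : R -> pt) : Prop :=
  a < b /\
  forall t, a <= t <= b ->
    in_C0 (g t) /\
    derivable_pt_lim (fun s => pu (g s)) t (pw (g t)) /\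
    derivable_pt_lim (fun s => pv (g s)) t (pu (g t)).

Definition lim_pinfty (f : R -> R) (l : R) : Prop :=
  forall eps, 0 < eps -> exists T, forall t, T <= t -> Rabs (f t - l) < eps.
Definition lim_minfty (f : R -> R) (l : R) : Prop :=
  forall eps, 0 < eps -> exists T, forall t, t <= T -> Rabs (f t - l) < eps.

(* Layer problem with (u,v) = (ub,vb) frozen:  w' = z, z' = (w^3-w)/2 - vb. *)
Definition layer_solution (vb : R) (W Z : R -> R) : Prop :=
  forall t, derivable_pt_lim W t (Z t) /\
            derivable_pt_lim Z t ((W t ^ 3 - W t) / 2 - vb).

Definition layer_equilibrium (vb w z : R) : Prop :=
  z = 0 /\ (w ^ 3 - w) / 2 - vb = 0.

Definition layer_heteroclinic (vb : R) (W Z : R -> R) (wm wp : R) : Prop :=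
  layer_solution vb W Z /\
  layer_equilibrium vb wm 0 /\ layer_equilibrium vb wp 0 /\ wm <> wp /\
  lim_minfty W wm /\ lim_minfty Z 0 /\
  lim_pinfty W wp /\ lim_pinfty Z 0.

(* A singular periodic orbit in {H = mu} consisting of precisely two slow
   segments g1 (in C_{0,l}) and g2 (in C_{0,r}) and two fast segments,
   concatenated as  g1 -> fast1 -> g2 -> fast2 -> g1 (closed curve). *)
Definition singular_periodic_orbit_2slow_2fast (mu : R) : Prop :=
  exists (a1 b1 a2 b2 : R) (g1 g2 : R -> pt)
         (ub1 vb1 ub2 vb2 : R) (W1 Z1 W2 Z2 : R -> R),
    reduced_segment a1 b1 g1 /\ reduced_segment a2 b2 g2 /\
    (forall t, a1 <= t <= b1 -> in_C0l (g1 t)) /\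
    (forall t, a2 <= t <= b2 -> in_C0r (g2 t)) /\
    layer_heteroclinic vb1 W1 Z1 (pw (g1 b1)) (pw (g2 a2)) /\
    pu (g1 b1) = ub1 /\ pv (g1 b1) = vb1 /\
    pu (g2 a2) = ub1 /\ pv (g2 a2) = vb1 /\
    layer_heteroclinic vb2 W2 Z2 (pw (g2 b2)) (pw (g1 a1)) /\
    pu (g2 b2) = ub2 /\ pv (g2 b2) = vb2 /\
    pu (g1 a1) = ub2 /\ pv (g1 a1) = vb2 /\
    (forall t, a1 <= t <= b1 -> Hp (g1 t) = mu) /\
    (forall t, a2 <= t <= b2 -> Hp (g2 t) = mu) /\
    (forall t, H ub1 vb1 (W1 t) (Z1 t) = mu) /\
    (forall t, H ub2 vb2 (W2 t) (Z2 t) = mu).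

From Stdlib Require Import Reals Lra Ranalysis5.
From Coquelicot Require Import Coquelicot.
Open Scope R_scope.

(* On C_0 one has 8 H = 4 u^2 - 3 w^4 + 2 w^2.  A fast jump keeps (u, v) and H and
   joins the two outer branches, which forces it to run between w = -1 and w = 1
   at v = 0; hence both jumps occur where 4 u^2 = 8 mu + 1.  On the left slow
   segment u' = w < 0, so u decreases strictly from u_0 to -u_0 and u_0 > 0, i.e.
   mu > -1/8; and where it crosses u = 0 we get 8 mu = 2 w^2 - 3 w^4 < 1/3 because
   w^2 > 1/3, i.e. mu < 1/24.
   Conversely, for mu in that interval the right slow segment is parametrised by
   u in [-u_0, u_0], with w given by the level set and time t = int du / w; its
   image under the symmetry (u, v, w, z) -> -(u, v, w, z) is the left segment, and
   the jumps are the kink w = tanh (t/2) of the layer problem at v = 0 and its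
   reflection. *)

Definition pt_opp (p : pt) : pt := mkpt (- pu p) (- pv p) (- pw p) (- pz p).

Lemma Hp_opp p : Hp (pt_opp p) = Hp p.
Proof. unfold Hp, H; simpl; ring. Qed.

Lemma in_C0_opp p : in_C0 p -> in_C0 (pt_opp p).
Proof. intros [hz hv]; unfold in_C0; simpl; rewrite hz, hv; split; field. Qed.

Lemma in_C0r_opp p : in_C0r p -> in_C0l (pt_opp p).
Proof. intros [hC hw]; split; [exact (in_C0_opp p hC) | simpl; lra]. Qed.

Lemma reduced_segment_opp a b g :
  reduced_segment a b g -> reduced_segment a b (fun t => pt_opp (g t)).
Proof.
  intros [hab hg]; split; [exact hab |]; intros t ht.
  destruct (hg t ht) as (hC & du & dv); split; [|split]; simpl.
  - exact (in_C0_opp _ hC).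
  - exact (derivable_pt_lim_opp _ _ _ du).
  - exact (derivable_pt_lim_opp _ _ _ dv).
Qed.

Lemma lim_pinfty_opp f l : lim_pinfty f l -> lim_pinfty (fun t => - f t) (- l).
Proof.
  intros h eps heps; destruct (h eps heps) as [T hT]; exists T; intros t ht.
  rewrite <- Rabs_Ropp; replace (- (- f t - - l)) with (f t - l) by ring; auto.
Qed.

Lemma lim_minfty_opp f l : lim_minfty f l -> lim_minfty (fun t => - f t) (- l).
Proof.
  intros h eps heps; destruct (h eps heps) as [T hT]; exists T; intros t ht.
  rewrite <- Rabs_Ropp; replace (- (- f t - - l)) with (f t - l) by ring; auto.
Qed.

Lemma layer_heteroclinic_opp vb W Z wm wp :
  layer_heteroclinic vb W Z wm wp ->
  layer_heteroclinic (- vb) (fun t => - W t) (fun t => - Z t) (- wm) (- wp).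
Proof.
  intros (hsol & [_ em] & [_ ep] & hne & lWm & lZm & lWp & lZp).
  repeat split; try lra; try rewrite <- Ropp_0; auto using lim_pinfty_opp, lim_minfty_opp.
  - apply derivable_pt_lim_opp, hsol.
  - replace (((- W t) ^ 3 - - W t) / 2 - - vb) with (- ((W t ^ 3 - W t) / 2 - vb)) by field.
    apply derivable_pt_lim_opp, hsol.
Qed.

Lemma inv_sqrt3_sq : 0 < 1 / sqrt 3 /\ (1 / sqrt 3) ^ 2 = 1 / 3.
Proof.
  assert (h3 := sqrt_lt_R0 3 ltac:(lra)); assert (hsq := sqrt_sqrt 3 ltac:(lra)).
  split; [apply Rdiv_lt_0_compat; lra |].
  replace ((1 / sqrt 3) ^ 2) with (1 / (sqrt 3 * sqrt 3)) by (field; lra).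
  rewrite hsq; reflexivity.
Qed.

Lemma in_C0l_w p : in_C0l p -> pw p < 0 /\ 1 / 3 < pw p ^ 2.
Proof. intros [_ hw]; destruct inv_sqrt3_sq; split; nra. Qed.

Lemma in_C0r_w p : in_C0r p -> 0 < pw p /\ 1 / 3 < pw p ^ 2.
Proof. intros [_ hw]; destruct inv_sqrt3_sq; split; nra. Qed.

Lemma Hp_C0 p : in_C0 p -> 8 * Hp p = 4 * pu p ^ 2 - 3 * pw p ^ 4 + 2 * pw p ^ 2.
Proof. intros [hz hv]; unfold Hp, H; rewrite hz, hv; field. Qed.

(* Equal u and H force w^2 to agree, the outer branches then force w_B = - w_A,
   and equal v = (w^3 - w)/2 leaves only w_A = -1. *)
Lemma jump_endpoints (A B : pt) :
  in_C0l A -> in_C0r B -> pu A = pu B -> pv A = pv B -> Hp A = Hp B ->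
  pw A = -1 /\ pw B = 1.
Proof.
  intros hA hB hu hv hH.
  destruct (in_C0l_w A hA) as [a1 a2], (in_C0r_w B hB) as [b1 b2].
  assert (eA := Hp_C0 A (proj1 hA)); assert (eB := Hp_C0 B (proj1 hB)).
  destruct hA as [[_ vA] _], hB as [[_ vB] _].
  set (x := pw A) in *; set (y := pw B) in *.
  assert (hsq : (x ^ 2 - y ^ 2) * (3 * (x ^ 2 + y ^ 2) - 2) = 0) by (rewrite hu in eA; nra).
  assert (hxy : x = - y).
  { destruct (Rmult_integral _ _ hsq); nra. }
  assert (hcub : x * (x ^ 2 - 1) = 0) by (subst x; nra).
  destruct (Rmult_integral _ _ hcub); nra.
Qed.

Lemma left_segment_u_decreasing a b g :
  reduced_segment a b g -> (forall t, a <= t <= b -> in_C0l (g t)) ->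
  pu (g b) < pu (g a).
Proof.
  intros [hab hg] hl.
  destruct (MVT_cor2 (fun s => pu (g s)) (fun s => pw (g s)) a b hab
              (fun c hc => proj1 (proj2 (hg c hc)))) as [c [hmvt hc]].
  destruct (in_C0l_w _ (hl c ltac:(lra))); nra.
Qed.

Lemma reduced_segment_u_zero a b g :
  reduced_segment a b g -> pu (g b) < 0 < pu (g a) ->
  exists t, a <= t <= b /\ pu (g t) = 0.
Proof.
  intros [hab hg] [hb ha].
  destruct (IVT_interv (fun s => - pu (g s)) a b) as [t [ht h0]]; try lra.
  - intros s hs; apply continuity_pt_opp, derivable_continuous_pt.
    exists (pw (g s)); exact (proj1 (proj2 (hg s hs))).
  - exists t; split; [exact ht | lra].
Qed.

Lemma Hp_C0l_u0 p : in_C0l p -> pu p = 0 -> Hp p < 1 / 24.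
Proof.
  intros hp hu; assert (e := Hp_C0 p (proj1 hp)).
  destruct (in_C0l_w p hp) as [_ hw]; rewrite hu in e; nra.
Qed.

Lemma singular_orbit_mu_range mu :
  singular_periodic_orbit_2slow_2fast mu -> - (1 / 8) < mu /\ mu < 1 / 24.
Proof.
  intros (a1 & b1 & a2 & b2 & g1 & g2 & ub1 & vb1 & ub2 & vb2 & W1 & Z1 & W2 & Z2 &
          s1 & s2 & l1 & r2 & _ & u1 & v1 & u1' & v1' & _ & u2 & v2 & u2' & v2' &
          h1 & h2 & _ & _).
  assert (ab1 := proj1 s1); assert (ab2 := proj1 s2).
  assert (iA := l1 b1 ltac:(lra)); assert (iB := r2 a2 ltac:(lra)).
  assert (iC := r2 b2 ltac:(lra)); assert (iD := l1 a1 ltac:(lra)).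
  destruct (jump_endpoints _ _ iA iB ltac:(congruence) ltac:(congruence)
              ltac:(rewrite h1, h2; lra)) as [wA _].
  destruct (jump_endpoints _ _ iD iC ltac:(congruence) ltac:(congruence)
              ltac:(rewrite h1, h2; lra)) as [wD _].
  assert (eA := Hp_C0 _ (proj1 iA)); assert (eD := Hp_C0 _ (proj1 iD)).
  rewrite h1, wA, u1 in eA by lra; rewrite h1, wD, u2' in eD by lra.
  assert (hdec := left_segment_u_decreasing _ _ _ s1 l1).
  rewrite u1, u2' in hdec.
  assert (hub : ub1 = - ub2) by nra.
  split; [nra |].
  destruct (reduced_segment_u_zero _ _ _ s1 ltac:(rewrite u1, u2'; lra)) as [t [ht h0]].
  rewrite <- (h1 t ht); exact (Hp_C0l_u0 _ (l1 t ht) h0).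
Qed.

Lemma lim_pinfty_of_exp_bound f l C :
  (forall t, Rabs (f t - l) <= C * exp (- t)) -> lim_pinfty f l.
Proof.
  intros hb eps heps.
  set (K := 2 * (Rabs C + 1) / eps).
  assert (hK : 0 < K) by (unfold K; assert (0 <= Rabs C) by apply Rabs_pos;
                           apply Rdiv_lt_0_compat; lra).
  exists (ln K); intros t ht.
  assert (hexp : exp (- t) <= / K).
  { rewrite <- (exp_ln K hK), <- exp_Ropp.
    destruct (Rle_lt_or_eq_dec _ _ ht) as [hlt | ->]; [left; apply exp_increasing |]; lra. }
  assert (hC := Rle_abs C); assert (hC0 := Rabs_pos C); assert (he := exp_pos (- t)).
  apply (Rle_lt_trans _ _ _ (hb t)).
  apply (Rle_lt_trans _ ((Rabs C + 1) * / K)); [nra |].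
  replace ((Rabs C + 1) * / K) with (eps / 2) by (unfold K; field; lra); lra.
Qed.

Lemma lim_minfty_of_exp_bound f l C :
  (forall t, Rabs (f t - l) <= C * exp t) -> lim_minfty f l.
Proof.
  intros hb eps heps.
  destruct (lim_pinfty_of_exp_bound (fun t => f (- t)) l C) with eps as [T hT];
    [intro t; apply hb | exact heps |].
  exists (- T); intros t ht; rewrite <- (Ropp_involutive t); apply hT; lra.
Qed.

(* The kink w = tanh(t/2) of the layer problem at v = 0, with z = w' = (1 - w^2)/2. *)
Definition kink (t : R) : R := 1 - 2 / (exp t + 1).
Definition kink_z (t : R) : R := (1 - kink t ^ 2) / 2.

Lemma kink_layer_solution : layer_solution 0 kink kink_z.
Proof.
  intro t; assert (he := exp_pos t); unfold kink_z, kink.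
  split; apply is_derive_Reals; auto_derive; try (intro; lra); field; lra.
Qed.

Lemma kink_exp_bounds t :
  Rabs (kink t - 1) <= 2 * exp (- t) /\ Rabs (kink t - -1) <= 2 * exp t /\
  Rabs (kink_z t - 0) <= 2 * exp (- t) /\ Rabs (kink_z t - 0) <= 2 * exp t.
Proof.
  assert (he := exp_pos t); rewrite exp_Ropp.
  unfold kink_z, kink; set (s := exp t) in *.
  replace ((1 - (1 - 2 / (s + 1)) ^ 2) / 2 - 0) with (2 * s / (s + 1) ^ 2) by (field; lra).
  replace (1 - 2 / (s + 1) - 1) with (- (2 / (s + 1))) by ring.
  replace (1 - 2 / (s + 1) - -1) with (2 * s / (s + 1)) by (field; lra).
  rewrite Rabs_Ropp, !Rabs_pos_eq; [| apply Rdiv_le_0_compat; nra ..].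
  assert (hd : / (s + 1) * (s + 1) = 1) by (apply Rinv_l; lra).
  assert (hi : / s * s = 1) by (apply Rinv_l; lra).
  assert (0 < / (s + 1)) by (apply Rinv_0_lt_compat; lra).
  assert (0 < / s) by (apply Rinv_0_lt_compat; lra).
  unfold Rdiv; rewrite <- pow_inv.
  repeat split; nra.
Qed.

Lemma kink_heteroclinic : layer_heteroclinic 0 kink kink_z (-1) 1.
Proof.
  assert (hb := kink_exp_bounds).
  repeat split; try lra; try apply kink_layer_solution;
    [eapply lim_minfty_of_exp_bound | eapply lim_minfty_of_exp_bound
    | eapply lim_pinfty_of_exp_bound | eapply lim_pinfty_of_exp_bound];
    intro t; apply hb.
Qed.

Lemma antikink_heteroclinic :
  layer_heteroclinic 0 (fun t => - kink t) (fun t => - kink_z t) 1 (-1).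
Proof.
  pose proof (layer_heteroclinic_opp _ _ _ _ _ kink_heteroclinic) as h.
  rewrite Ropp_0 in h; replace (- -1) with 1 in h by ring;
  replace (- 1) with (-1) in h by ring; exact h.
Qed.

Lemma H_layer_v0 u w z : z ^ 2 = ((1 - w ^ 2) / 2) ^ 2 -> H u 0 w z = (4 * u ^ 2 - 1) / 8.
Proof. intro hz; unfold H; rewrite hz; field. Qed.

Lemma pos_derivative_increasing (f f' : R -> R) :
  (forall x, derivable_pt_lim f x (f' x)) -> (forall x, 0 < f' x) ->
  forall x y, x < y -> f x < f y.
Proof. intros hf hpos; exact (positive_derivative f (fun x => exist _ (f' x) (hf x)) hpos). Qed.

Lemma derivable_increasing_inverse (f f' : R -> R) (lb ub : R) :
  lb < ub -> (forall x, derivable_pt_lim f x (f' x)) -> (forall x, 0 < f' x) ->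
  exists g : R -> R,
    (forall x, lb <= x <= ub -> g (f x) = x) /\
    (forall t, f lb < t < f ub -> derivable_pt_lim g t (/ f' (g t))).
Proof.
  intros hlu hf hpos.
  set (pr := fun x => exist _ (f' x) (hf x) : derivable_pt f x).
  assert (incr := pos_derivative_increasing f f' hf hpos).
  assert (cont : forall x, continuity_pt f x) by (intro; apply derivable_continuous_pt, pr).
  assert (inj : forall x y, f x = f y -> x = y).
  { intros x y hxy; destruct (Rtotal_order x y) as [h | [h | h]];
      [apply incr in h | | apply incr in h]; lra. }
  set (g t := match Rle_dec (f lb) t, Rle_dec t (f ub) with
              | left h1, left h2 =>
                  proj1_sig (f_interv_is_interv f lb ub t hlu (conj h1 h2) (fun x _ => cont x))
              | _, _ => lb end).
  assert (hg : forall t, f lb <= t <= f ub -> lb <= g t <= ub /\ f (g t) = t).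
  { intros t [h1 h2]; unfold g.
    destruct (Rle_dec (f lb) t); [| contradiction].
    destruct (Rle_dec t (f ub)); [| contradiction].
    exact (proj2_sig (f_interv_is_interv f lb ub t hlu _ _)). }
  assert (mono : forall x y, x <= y -> f x <= f y).
  { intros x y hxy; destruct (Rle_lt_or_eq_dec _ _ hxy) as [h | ->];
      [apply Rlt_le, incr, h | lra]. }
  assert (gf : forall x, lb <= x <= ub -> g (f x) = x).
  { intros x hx; apply inj, hg; split; apply mono; lra. }
  exists g; split; [exact gf |]; intros t ht.
  assert (hgt : f lb <= t <= f ub) by lra.
  assert (gcont : continuity_pt g t).
  { apply (continuity_pt_recip_interv f g lb ub hlu); [| | | intros; apply cont | exact ht].
    - intros x y _ hxy _; apply incr, hxy.
    - intros x h1 h2; exact (proj2 (hg x (conj h1 h2))).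
    - intros x h1 h2; exact (proj1 (hg x (conj h1 h2))). }
  assert (hgi : g (f lb) <= g t <= g (f ub)) by (rewrite !gf by lra; exact (proj1 (hg t hgt))).
  assert (hd := derivable_pt_lim_recip_interv f g (f lb) (f ub) t (fun a _ => pr a) gcont
                  (incr _ _ hlu) ht hgi (fun x hx => proj2 (hg x hx))).
  unfold derive_pt, pr in hd; simpl in hd.
  rewrite <- Rdiv_1_l; apply hd, Rgt_not_eq, hpos.
Qed.

Section RightBranch.

Variable mu : R.
Hypothesis mu_lt : mu < 1 / 24.

(* On C_0 the level set {H = mu} reads 3 w^4 - 2 w^2 = 4 u^2 - 8 mu; its root with
   w^2 > 1/3 is w^2 = (1 + branch_disc u) / 3. *)
Definition branch_disc (u : R) : R := sqrt (1 + 12 * u ^ 2 - 24 * mu).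
Definition branch_w (u : R) : R := sqrt ((1 + branch_disc u) / 3).
Definition branch_pt (u : R) : pt :=
  mkpt u ((branch_w u ^ 3 - branch_w u) / 2) (branch_w u) 0.

Lemma branch_disc_spec u : 0 < branch_disc u /\ branch_disc u ^ 2 = 1 + 12 * u ^ 2 - 24 * mu.
Proof.
  assert (h : 0 < 1 + 12 * u ^ 2 - 24 * mu) by nra.
  split; [apply sqrt_lt_R0, h | rewrite <- Rsqr_pow2; apply Rsqr_sqrt; lra].
Qed.

Lemma branch_w_spec u : 0 < branch_w u /\ branch_w u ^ 2 = (1 + branch_disc u) / 3.
Proof.
  destruct (branch_disc_spec u) as [hq _].
  split; [apply sqrt_lt_R0; lra | rewrite <- Rsqr_pow2; apply Rsqr_sqrt; lra].
Qed.

Lemma branch_pt_C0r u : in_C0r (branch_pt u).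
Proof.
  destruct (branch_disc_spec u) as [hq _], (branch_w_spec u) as [hw hw2], inv_sqrt3_sq.
  repeat split; simpl; nra.
Qed.

Lemma Hp_branch_pt u : Hp (branch_pt u) = mu.
Proof.
  destruct (branch_disc_spec u) as [_ hq2], (branch_w_spec u) as [_ hw2].
  unfold Hp, H; simpl; nra.
Qed.

Lemma branch_w_at_jump u : 4 * u ^ 2 = 8 * mu + 1 -> branch_w u = 1.
Proof.
  intro hu; unfold branch_w, branch_disc.
  replace (1 + 12 * u ^ 2 - 24 * mu) with (2 ^ 2) by nra.
  rewrite sqrt_pow2 by lra; replace ((1 + 2) / 3) with 1 by field; apply sqrt_1.
Qed.

Lemma branch_w_derive u : is_derive branch_w u (2 * u / (branch_w u * branch_disc u)).
Proof.
  destruct (branch_disc_spec u) as [hq _], (branch_w_spec u) as [hw _].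
  assert (hdisc : is_derive branch_disc u (24 * u / (2 * branch_disc u))).
  { apply is_derive_sqrt; [auto_derive; [exact I | ring] | nra]. }
  replace (2 * u / (branch_w u * branch_disc u))
    with (24 * u / (2 * branch_disc u) / 3 / (2 * branch_w u)) by (field; lra).
  apply is_derive_sqrt; [| lra].
  exact (is_derive_comp (fun q => (1 + q) / 3) branch_disc u (/ 3) _
           ltac:(auto_derive; [exact I | field]) hdisc).
Qed.

Lemma branch_v_derive u : is_derive (fun u => pv (branch_pt u)) u (u / branch_w u).
Proof.
  destruct (branch_disc_spec u) as [hq _], (branch_w_spec u) as [hw hw2].
  assert (hcub : is_derive (fun w => (w ^ 3 - w) / 2) (branch_w u)
                           ((3 * branch_w u ^ 2 - 1) / 2))
    by (auto_derive; [exact I | field]).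
  replace (u / branch_w u)
    with (2 * u / (branch_w u * branch_disc u) * ((3 * branch_w u ^ 2 - 1) / 2))
    by (rewrite hw2; field; lra).
  exact (is_derive_comp _ branch_w u _ _ hcub (branch_w_derive u)).
Qed.

Definition branch_time (x : R) : R := RInt (fun s => / branch_w s) 0 x.

Lemma branch_time_derive x : derivable_pt_lim branch_time x (/ branch_w x).
Proof.
  assert (hcont : forall s, continuous (fun s => / branch_w s) s).
  { intro s; apply continuous_Rinv_comp; [| apply Rgt_not_eq, branch_w_spec].
    apply (ex_derive_continuous branch_w); eexists; apply branch_w_derive. }
  apply is_derive_Reals, (is_derive_RInt (fun s => / branch_w s) branch_time 0); [| apply hcont].
  apply filter_forall; intro b.
  exact (RInt_correct _ _ _ (ex_RInt_continuous _ _ _ (fun s _ => hcont s))).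
Qed.

(* Time along a slow segment is t = int du / w, so u(t) inverts branch_time. *)
Lemma branch_segment u0 : 0 < u0 ->
  exists (a b : R) (g : R -> pt),
    reduced_segment a b g /\ g a = branch_pt (- u0) /\ g b = branch_pt u0 /\
    forall t, exists u, g t = branch_pt u.
Proof.
  intro hu0.
  assert (hpos : forall x, 0 < / branch_w x)
    by (intro; apply Rinv_0_lt_compat, branch_w_spec).
  assert (incr := pos_derivative_increasing _ _ branch_time_derive hpos).
  destruct (derivable_increasing_inverse _ _ (- u0 - 1) (u0 + 1) ltac:(lra)
              branch_time_derive hpos) as [P [hPF hPd]].
  exists (branch_time (- u0)), (branch_time u0), (fun t => branch_pt (P t)); cbv beta.
  rewrite (hPF (- u0)), (hPF u0) by lra.
  split; [| split; [reflexivity | split; [reflexivity | intro t; exists (P t); reflexivity]]].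
  split; [apply incr; lra |]; intros t ht.
  assert (dP : derivable_pt_lim P t (branch_w (P t))).
  { rewrite <- (Rinv_inv (branch_w (P t))); apply hPd.
    assert (branch_time (- u0 - 1) < branch_time (- u0)) by (apply incr; lra).
    assert (branch_time u0 < branch_time (u0 + 1)) by (apply incr; lra).
    lra. }
  split; [apply branch_pt_C0r | split; [exact dP |]]; simpl.
  replace (P t) with ((P t / branch_w (P t)) * branch_w (P t))
    by (field; apply Rgt_not_eq, branch_w_spec).
  apply (derivable_pt_lim_comp P (fun u => pv (branch_pt u))); [exact dP |].
  apply is_derive_Reals, branch_v_derive.
Qed.

End RightBranch.

Lemma singular_orbit_exists mu :
  - (1 / 8) < mu /\ mu < 1 / 24 -> singular_periodic_orbit_2slow_2fast mu.
Proof.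
  intros [hlo hhi].
  set (u0 := sqrt ((8 * mu + 1) / 4)).
  assert (hu0 : 0 < u0) by (apply sqrt_lt_R0; lra).
  assert (hu0sq : 4 * u0 ^ 2 = 8 * mu + 1)
    by (unfold u0; rewrite <- Rsqr_pow2, Rsqr_sqrt; lra).
  assert (wm := branch_w_at_jump mu (- u0) ltac:(nra)).
  assert (wp := branch_w_at_jump mu u0 hu0sq).
  destruct (branch_segment mu hhi u0 hu0) as (a & b & g & hseg & ga & gb & gbr).
  assert (hr : forall t, in_C0r (g t) /\ Hp (g t) = mu).
  { intro t; destruct (gbr t) as [u ->].
    split; [exact (branch_pt_C0r mu hhi u) | exact (Hp_branch_pt mu hhi u)]. }
  exists a, b, a, b, (fun t => pt_opp (g t)), g, (- u0), 0, u0, 0,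
    kink, kink_z, (fun t => - kink t), (fun t => - kink_z t).
  rewrite ga, gb; unfold branch_pt; simpl; rewrite wm, wp.
  split; [exact (reduced_segment_opp _ _ _ hseg) |].
  split; [exact hseg |].
  split; [intros t _; apply in_C0r_opp, hr |].
  split; [intros t _; apply hr |].
  split; [replace (- (1)) with (-1) by ring; exact kink_heteroclinic |].
  do 4 (split; [lra |]).
  split; [replace (- (1)) with (-1) by ring; exact antikink_heteroclinic |].
  do 4 (split; [lra |]).
  split; [intros t _; rewrite Hp_opp; apply hr |].
  split; [intros t _; apply hr |].
  split; intro t; rewrite H_layer_v0 by (unfold kink_z; field); nra.
Qed.

Theorem proposition1 (mu : R) :
  singular_periodic_orbit_2slow_2fast mu <-> (- (1 / 8) < mu /\ mu < 1 / 24).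
Proof. split; [apply singular_orbit_mu_range | apply singular_orbit_exists]. Qed.
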